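(* Let $c$ be a minimal-cellular cubic coordinate of size $n$ and let $i\in[n-1]$. If $c'=\uparrow_{i+1}(\uparrow_{i+2}(\cdots(\uparrow_{n-1}(c))\cdots))$ is well-defined (for $i=n-1$ this is $c'=c$), then $\uparrow_i(c')$ is well-defined.
   Context: A Tamari diagram of size $n$ is a word $u=u_1\cdots u_n$ of integers with $0\leq u_i\leq n-i$ and $u_{i+j}\leq u_i-j$ for all $i\in[n]$, $0\leq j\leq u_i$. A dual Tamari diagram of size $n$ is a word $v$ of integers with $0\leq v_i\leq i-1$ and $v_{i-j}\leq v_i-j$ for all $i\in[n]$, $0\leq j\leq v_i$. $(u,v)$ is a Tamari interval diagram if moreover for all $1\leq i<j\leq n$ with $j-i\leq u_i$ one has $v_j<j-i$. A cubic coordinate of size $n$ is $c\in\mathbb{Z}^{n-1}$ such that $(u,v)$ with $u_i=\max(c_i,0)$ ($i\in[n-1]$), $u_n=0$, $v_1=0$, $v_i=|\min(c_{i-1},0)|$ ($2\leq i\leq n$) is a Tamari interval diagram. For a cubic coordinate $c$ and $i\in[n-1]$, the minimal increase $\uparrow_i(c)$ is well-defined when there exists a cubic coordinate agreeing with $c$ outside position $i$ and with $i$-th entry $>c_i$; then $\uparrow_i(c)$ is obtained from $c$ by replacing $c_i$ by the smallest integer $t>c_i$ such that the result is a cubic coordinate (equivalently, it covers $c$ in the componentwise order and differs from $c$ only at position $i$). $c$ is minimal-cellular if $\uparrow_i(c)$ is well-defined for every $i\in[n-1]$. *)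

From mathcomp Require Import all_boot all_order all_algebra.
Set Implicit Arguments. Unset Strict Implicit. Unset Printing Implicit Defensive.
Import Order.TTheory GRing.Theory Num.Theory.
Local Open Scope ring_scope.

(* Words are 1-indexed functions nat -> nat (only positions 1..n matter). *)

Definition tamari_diagram (n : nat) (u : nat -> nat) : Prop :=
  forall i : nat, (1 <= i <= n)%N ->
    (u i <= n - i)%N /\ (forall j : nat, (j <= u i)%N -> (u (i + j) <= u i - j)%N).

Definition dual_tamari_diagram (n : nat) (v : nat -> nat) : Prop :=
  forall i : nat, (1 <= i <= n)%N ->
    (v i <= i - 1)%N /\ (forall j : nat, (j <= v i)%N -> (v (i - j) <= v i - j)%N).

Definition tamari_interval_diagram (n : nat) (u v : nat -> nat) : Prop :=
  [/\ tamari_diagram n u, dual_tamari_diagram n v &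
      forall i j : nat, (1 <= i)%N -> (i < j)%N -> (j <= n)%N ->
        (j - i <= u i)%N -> (v j < j - i)%N].

Definition ccoord (c : seq int) (i : nat) : int := nth 0 c i.-1.

Definition u_of (c : seq int) (i : nat) : nat :=
  if (1 <= i <= size c)%N then `|Num.max (ccoord c i) 0|%N else 0%N.

Definition v_of (c : seq int) (i : nat) : nat :=
  if (2 <= i <= (size c).+1)%N then `|Num.min (ccoord c i.-1) 0|%N else 0%N.

Definition cubic_coordinate (n : nat) (c : seq int) : Prop :=
  size c = n.-1 /\ tamari_interval_diagram n (u_of c) (v_of c).

Definition cset (c : seq int) (i : nat) (t : int) : seq int := set_nth 0 c i.-1 t.

Definition up_defined (n : nat) (c : seq int) (i : nat) : Prop :=
  exists t : int, ccoord c i < t /\ cubic_coordinate n (cset c i t).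

Definition is_up (n : nat) (c : seq int) (i : nat) (d : seq int) : Prop :=
  exists t : int, [/\ ccoord c i < t, cubic_coordinate n (cset c i t),
    d = cset c i t &
    forall t' : int, ccoord c i < t' < t -> ~ cubic_coordinate n (cset c i t')].

Definition minimal_cellular (n : nat) (c : seq int) : Prop :=
  cubic_coordinate n c /\
  forall i : nat, (1 <= i <= n.-1)%N -> up_defined n c i.

(* ups n c i d  <->  d = ↑_{i+1}(↑_{i+2}(...(↑_{n-1}(c))...)) is well-defined;
   for i = n-1 this is d = c. *)
Inductive ups (n : nat) (c : seq int) : nat -> seq int -> Prop :=
  | ups_base : ups n c n.-1 c
  | ups_step (i : nat) (d e : seq int) :
      ups n c i.+1 d -> is_up n d i.+1 e -> ups n c i e.

From mathcomp Require Import all_boot all_order all_algebra zify.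
From Stdlib Require Import FunctionalExtensionality Classical.
Set Implicit Arguments. Unset Strict Implicit. Unset Printing Implicit Defensive.
Import Order.TTheory GRing.Theory Num.Theory.
Local Open Scope ring_scope.

(* Each minimal increase only raises an entry, and the increases leading to c'
   happen at positions > i, so c' agrees with c up to position i and dominates it
   everywhere; hence v(c') <= v(c) pointwise.  If c_i < 0, raising it to 0 only
   clears v_(i+1).  If c_i = a >= 0, minimal cellularity of c gives b > a with
   c[i := b] cubic; the constraints on the reach i + u_i only involve u left of i
   and v right of i, so i + a + 1 is also an admissible reach in c'.  The largest
   admissible reach e yields the cubic coordinate c'[i := e - i]: by maximality,
   the arcs of u starting in (i, e] cannot go beyond e. *)

Lemma absz_max0 (m : nat) : `|Num.max m%:Z 0|%N = m.
Proof. by rewrite max_l. Qed.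

Lemma absz_max0_neg (x : int) : x < 0 -> `|Num.max x 0|%N = 0%N.
Proof. by move=> x_lt0; rewrite max_r ?ltW. Qed.

Lemma absz_min0 (m : nat) : `|Num.min m%:Z 0|%N = 0%N.
Proof. by rewrite min_r. Qed.

Lemma absz_min0_le (x y : int) : x <= y -> (`|Num.min y 0| <= `|Num.min x 0|)%N.
Proof.
move=> le_xy; case: (lerP 0 x) => hx; case: (lerP 0 y) => hy //=; last by lia.
by have := lt_le_trans hy (le_trans hx le_xy); rewrite ltxx.
Qed.

Section Coordinates.

Variables (c : seq int) (i : nat).
Hypothesis i_in : (1 <= i <= size c)%N.

Lemma size_cset t : size (cset c i t) = size c.
Proof. rewrite /cset size_set_nth; apply/maxn_idPr; lia. Qed.

Lemma u_of_cset t :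
  u_of (cset c i t) = fun k => if k == i then `|Num.max t 0|%N else u_of c k.
Proof.
apply: functional_extensionality => k.
rewrite /u_of /ccoord size_cset /cset nth_set_nth /=.
case: (k =P i) => [->|k_neq_i]; first by rewrite i_in eqxx.
by case: ifP => // /andP[k_ge1 _]; case: eqP => // ?; lia.
Qed.

Lemma v_of_cset t :
  v_of (cset c i t) = fun k => if k == i.+1 then `|Num.min t 0|%N else v_of c k.
Proof.
apply: functional_extensionality => k.
rewrite /v_of /ccoord size_cset /cset nth_set_nth /=.
case: (k =P i.+1) => [->|k_neq_i1]; first by rewrite eqxx ifT //; lia.
by case: ifP => // /andP[k_ge2 _]; case: eqP => // ?; lia.
Qed.

Lemma u_of_cset0 : ccoord c i < 0 -> u_of (cset c i 0) = u_of c.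
Proof.
move=> ci_lt0; rewrite u_of_cset; apply: functional_extensionality => k.
by case: eqP => // ->; rewrite /u_of i_in (absz_max0_neg ci_lt0).
Qed.

Lemma v_of_cset_nonneg (m : nat) : 0 <= ccoord c i -> v_of (cset c i m) = v_of c.
Proof.
move=> ci_ge0; rewrite v_of_cset absz_min0; apply: functional_extensionality => k.
case: eqP => // ->; rewrite /v_of ifT /=; last by lia.
by case: (ccoord c i) ci_ge0 => // a _; rewrite absz_min0.
Qed.

End Coordinates.

Lemma u_of_eq_prefix (c d : seq int) (j : nat) :
  size c = size d -> (forall m, (m < j)%N -> nth 0 c m = nth 0 d m) ->
  forall k, (k <= j)%N -> u_of c k = u_of d k.
Proof.
move=> eq_sz eq_cd k le_kj; rewrite /u_of /ccoord eq_sz.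
by case: ifP => // /andP[k_ge1 _]; rewrite eq_cd //; lia.
Qed.

Lemma v_of_le (c d : seq int) :
  size c = size d -> (forall m, nth 0 c m <= nth 0 d m) ->
  forall k, (v_of d k <= v_of c k)%N.
Proof.
move=> eq_sz le_cd k; rewrite /v_of eq_sz.
by case: ifP => // _; exact: absz_min0_le (le_cd _).
Qed.

Lemma ups_spec n c i c' : cubic_coordinate n c -> ups n c i c' ->
  [/\ cubic_coordinate n c',
      forall m, (m < i)%N -> nth 0 c' m = nth 0 c m &
      forall m, nth 0 c m <= nth 0 c' m].
Proof.
move=> cc; elim=> [|j d e _ [cd eq_cd le_cd] [t [lt_t cct -> _]]]; first by split.
split=> // m; rewrite /cset nth_set_nth /=.
  by case: eqP => [?|_] lt_mj; [lia | apply: eq_cd; lia].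
by case: eqP => [->|_] //; apply: le_trans (le_cd j) (ltW lt_t).
Qed.

Lemma tamari_interval_diagram_clear_v n (u v : nat -> nat) m :
  tamari_interval_diagram n u v ->
  tamari_interval_diagram n u (fun k => if k == m then 0 else v k)%N.
Proof.
move=> [Tu Tv TI]; split=> // [k k_in | i j i_ge1 lt_ij j_le_n le_u].
- have [vk_le vk_dual] := Tv k k_in.
  case: eqP => [->|_]; first by split=> // j; rewrite leqn0 => /eqP ->; rewrite subn0 eqxx.
  by split=> // j le_j; case: eqP => // _; apply: vk_dual.
- by case: eqP => _; [lia | apply: TI].
Qed.

(* [e] is a candidate for [i + u i] after the update [u i := e - i]; only the
   constraints from arcs of [u] starting inside [(i, e]] are left out. *)
Definition admissible_reach (n : nat) (u v : nat -> nat) (i e : nat) : Prop :=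
  [/\ (e <= n)%N,
      forall i', (1 <= i')%N -> (i' < i)%N -> (i - i' <= u i')%N -> (e <= i' + u i')%N &
      forall k, (i < k)%N -> (k <= e)%N -> (v k < k - i)%N].

Lemma admissible_reach_le n (u u' v v' : nat -> nat) i e e' :
  (forall i', (i' < i)%N -> u' i' = u i') -> (forall k, (v' k <= v k)%N) ->
  (e' <= e)%N -> admissible_reach n u v i e -> admissible_reach n u' v' i e'.
Proof.
move=> eq_u le_v le_e [e_le_n u_reach v_small]; split=> [|i' ? lt_i'| k ? ?].
- lia.
- by rewrite eq_u // => /u_reach; lia.
- by have := le_v k; have := v_small k; lia.
Qed.

Lemma admissible_reach_diagram n (u v : nat -> nat) i :
  tamari_interval_diagram n u v -> (1 <= i <= n)%N -> admissible_reach n u v i (i + u i).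
Proof.
move=> [Tu _ TI] i_in; have [ui_le _] := Tu i i_in.
split=> [|i' i'_ge1 lt_i' le_u | k lt_ik le_k]; last by apply: TI; lia.
- lia.
- have [_ /(_ (i - i')%N le_u)] := Tu i' ltac:(lia).
  by rewrite subnKC; lia.
Qed.

Lemma exists_last_bounded (P : nat -> Prop) (B m : nat) :
  (forall e, P e -> e <= B)%N -> P m -> exists e, [/\ (m <= e)%N, P e & ~ P e.+1].
Proof.
move=> P_le; move: {2}(B - m)%N (leqnn (B - m)) => d.
elim: d m => [|d IH] m le_d Pm.
  by exists m; split=> // /P_le; have := P_le _ Pm; lia.
have [Pm1|] := classic (P m.+1); last by exists m.
have [e [le_e Pe nPe]] := IH m.+1 ltac:(have := P_le _ Pm1; lia) Pm1.
by exists e; split=> //; lia.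
Qed.

Section LastAdmissibleReach.

Variables (n : nat) (u v : nat -> nat) (i e : nat).
Hypotheses (Tuv : tamari_interval_diagram n u v) (i_ge1 : (1 <= i)%N) (lt_ie : (i < e)%N).
Hypotheses (adm_e : admissible_reach n u v i e) (nadm_e1 : ~ admissible_reach n u v i e.+1).

(* An arc from k past e would make e.+1 admissible: the arcs from i' < i covering
   i nest over it, and it bounds v (e.+1). *)
Lemma last_admissible_reach_closed k : (i < k <= e)%N -> (k + u k <= e)%N.
Proof.
move=> k_in; case: (leqP (k + u k) e) => // lt_e_reach; case: nadm_e1.
have [Tu _ TI] := Tuv; have [e_le_n u_reach v_small] := adm_e.
have [uk_le _] := Tu k ltac:(lia).
split=> [|i' i'_ge1 lt_i' le_u | k' lt_ik' le_k'].
- lia.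
- have [_ /(_ (k - i')%N ltac:(have := u_reach i' i'_ge1 lt_i' le_u; lia))] := Tu i' ltac:(lia).
  by rewrite subnKC; lia.
- have [le_k'e|lt_ek'] := leqP k' e; first exact: v_small.
  have -> : k' = e.+1 by lia.
  by have := TI k e.+1 ltac:(lia) ltac:(lia) ltac:(lia) ltac:(lia); lia.
Qed.

Lemma tamari_interval_diagram_set_u :
  tamari_interval_diagram n (fun k => if k == i then e - i else u k)%N v.
Proof.
have [Tu Tv TI] := Tuv; have [e_le_n u_reach v_small] := adm_e.
split=> // [k k_in | i' j i'_ge1 lt_i'j j_le_n].
- case: eqP => [->|/eqP k_neq_i].
    split=> [|j le_j]; first lia.
    case: eqP => [?|/eqP ne_i]; first lia.
    by have := last_admissible_reach_closed (k := i + j) ltac:(lia); lia.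
  have [uk_le uk_nested] := Tu k k_in.
  split=> // j le_j; case: eqP => [eq_i|_]; last exact: uk_nested.
  by have := u_reach k ltac:(lia) ltac:(lia) ltac:(lia); lia.
- case: eqP => [eq_i le_j|_]; last exact: TI.
  by rewrite eq_i; apply: v_small; lia.
Qed.

End LastAdmissibleReach.

Lemma up_defined_neg n d i :
  cubic_coordinate n d -> (1 <= i <= size d)%N -> ccoord d i < 0 -> up_defined n d i.
Proof.
move=> [sz T] i_in di_lt0; exists 0; split=> //; split; first by rewrite size_cset.
rewrite u_of_cset0 // v_of_cset //; exact: tamari_interval_diagram_clear_v.
Qed.

Lemma up_defined_of_admissible_reach n d i (a : nat) :
  cubic_coordinate n d -> (1 <= i <= size d)%N -> ccoord d i = a ->
  admissible_reach n (u_of d) (v_of d) i (i + a).+1 -> up_defined n d i.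
Proof.
move=> [sz T] i_in di adm.
have [|e [le_e adm_e nadm_e1]] := exists_last_bounded (B := n) _ adm; first by move=> e [].
exists (e - i)%N; split; first by rewrite di ltz_nat; lia.
split; first by rewrite size_cset.
rewrite u_of_cset // v_of_cset_nonneg ?di //.
by apply: tamari_interval_diagram_set_u => //; lia.
Qed.

Theorem lemma4p3 (n : nat) (c : seq int) (i : nat) (c' : seq int) :
  minimal_cellular n c -> (1 <= i <= n.-1)%N -> ups n c i c' ->
  up_defined n c' i.
Proof.
move=> [cc up_c] i_in /(ups_spec cc) [cc' eq_c'c le_cc'].
have [[sz _] [sz' _]] := (cc, cc').
have i_in_c : (1 <= i <= size c)%N by rewrite sz; lia.
have sz_c'c : size c' = size c by rewrite sz sz'.
have c'i : ccoord c' i = ccoord c i by rewrite /ccoord eq_c'c //; lia.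
have [ci_lt0|] := ltrP (ccoord c i) 0; first by apply: up_defined_neg; rewrite ?sz_c'c ?c'i.
case ci: (ccoord c i) => [a|//] _.
have [t [lt_t [_ Tt]]] := up_c i i_in.
have [b t_b] : exists b : nat, t = b by move: lt_t; rewrite ci; case: t {Tt} => [b|//]; exists b.
have ui_t : u_of (cset c i t) i = b by rewrite u_of_cset // eqxx t_b absz_max0.
apply: (up_defined_of_admissible_reach (a := a)); rewrite ?sz_c'c ?c'i //.
apply: (admissible_reach_le _ _ _ (admissible_reach_diagram Tt _)) => [i' lt_i'| k | |].
- rewrite u_of_cset // ifN; last by apply/eqP; lia.
  by apply: (u_of_eq_prefix sz_c'c eq_c'c); lia.
- by rewrite t_b v_of_cset_nonneg ?ci //; apply: v_of_le.
- by move: lt_t; rewrite ui_t ci t_b ltz_nat; lia.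
- lia.
Qed.
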